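(* Let $g\ge1$ and let $\alpha_1,\dots,\alpha_{2g-1},\alpha$ be mutually distinct complex numbers. Let $\widehat q^{(g)0}_{ij}$ and $\widehat q^{(g-1)}_{ij}$ be defined by the expansions (in $z_1,z_2$ with $x_k=z_k^{-2}$) $$\Big(\frac1{2(x_1-x_2)^2}+\frac{H_g(x_1,x_2)}{4(x_1-x_2)^2y^{(g)}_1y^{(g)}_2}\Big)dx_1dx_2=\Big(\frac1{(z_1-z_2)^2}+\sum_{i,j\ge1}\widehat q^{(g)0}_{ij}z_1^{i-1}z_2^{j-1}\Big)dz_1dz_2,$$ $$\Big(\frac1{2(x_1-x_2)^2}+\frac{H_{g-1}(x_1,x_2)}{4(x_1-x_2)^2y^{(g-1)}_1y^{(g-1)}_2}\Big)dx_1dx_2=\Big(\frac1{(z_1-z_2)^2}+\sum_{i,j\ge1}\widehat q^{(g-1)}_{ij}z_1^{i-1}z_2^{j-1}\Big)dz_1dz_2,$$ and put $Q_{ij}=-\widehat q^{(g)0}_{ij}+\widehat q^{(g-1)}_{ij}$. Then for all $i,j\ge0$, $$Q_{2i+1,2j+1}=-\alpha\sum_{k=0}^{g-1}\tilde\mu_{4k}\,s_{(i-k)}(\Lambda)\,s_{(j-k)}(\Lambda).$$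
   Context: $f_{g-1}(x)=\prod_{j=1}^{2g-1}(x-\alpha_j)=\sum_{i=0}^{2g-1}\tilde\mu_{4g-2-2i}x^i$ and $f_g(x)=(x-\alpha)^2f_{g-1}(x)=\sum_{i=0}^{2g+1}\mu_{4g+2-2i}x^i$, with $\mu_k,\tilde\mu_k=0$ for indices outside these ranges. $H_g(x_1,x_2)=\sum_{i=0}^g(x_1x_2)^i(2\mu_{4g+2-4i}+\mu_{4g-4i}(x_1+x_2))$, $H_{g-1}(x_1,x_2)=\sum_{i=0}^{g-1}(x_1x_2)^i(2\tilde\mu_{4g-2-4i}+\tilde\mu_{4g-4-4i}(x_1+x_2))$. $F_0(z)=(\prod_{j=1}^{2g-1}(1-\alpha_jz^2))^{1/2}$ with $F_0(0)=1$, $F(z)=(1-\alpha z^2)F_0(z)$, $y^{(g-1)}_k=z_k^{-(2g-1)}F_0(z_k)$, $y^{(g)}_k=z_k^{-(2g+1)}F(z_k)$. $\Lambda=(\Lambda_1,\Lambda_2,\dots)$ with $\Lambda_n=\frac1{2n}(2\alpha^n+\sum_{j=1}^{2g-1}\alpha_j^n)$; Schur polynomials $s_{(n)}$ are defined by $\exp(\sum_{i\ge1}t_ik^i)=\sum_{n\ge0}s_{(n)}(t)k^n$, and $s_{(n)}=0$ for $n<0$. *)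

(* Formal power series are represented by their coefficient
   functions; all the "defined by an expansion" objects of the paper are
   rendered as formal power series identities. *)
From HB Require Import structures.
From mathcomp Require Import all_boot all_order all_algebra.
From mathcomp Require Import reals complex.

Set Implicit Arguments.
Unset Strict Implicit.
Unset Printing Implicit Defensive.

Import Order.TTheory GRing.Theory Num.Theory.
Local Open Scope ring_scope.

Section Series.
Variable K : fieldType.

Definition ps := nat -> K.

Definition ps_mul (f g : ps) : ps :=
  fun n => \sum_(k < n.+1) f k * g (n - k)%N.

Fixpoint ps_pow (f : ps) (m : nat) : ps :=
  match m with
  | 0 => fun n => if n == 0%N then 1 else 0
  | m'.+1 => ps_mul f (ps_pow f m')
  end.

Definition ps_of_poly (p : {poly K}) : ps := fun n => p`_n.

(* exp(f) = sum_m f^m / m!, for f with zero constant term (then only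
   m <= n contributes to the coefficient of z^n) *)
Definition ps_exp (f : ps) : ps :=
  fun n => \sum_(m < n.+1) ps_pow f m n / (m`!)%:R.

(* Schur polynomials s_(n)(t):  exp(sum_{i>=1} t_i k^i) = sum_n s_(n)(t) k^n,
   and s_(n) = 0 for n < 0. *)
Definition schur (t : nat -> K) (n : int) : K :=
  match n with
  | Posz m => ps_exp (fun i => if i is 0 then 0 else t i) m
  | Negz _ => 0
  end.

Definition is_sqrt_series (F : ps) (p : {poly K}) : Prop :=
  F 0%N = 1 /\ forall n, ps_mul F F n = p`_n.

(* ---------- two-variable formal power series: (a,b) |-> coeff of z1^a z2^b *)
Definition ps2 := nat -> nat -> K.

Definition ps2_add (A B : ps2) : ps2 := fun a b => A a b + B a b.

Definition ps2_mul (A B : ps2) : ps2 :=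
  fun a b => \sum_(i < a.+1) \sum_(j < b.+1) A i j * B (a - i)%N (b - j)%N.

Definition ps2_mono (c : K) (e1 e2 : nat) : ps2 :=
  fun a b => if (a == e1) && (b == e2) then c else 0.

Definition ps2_tensor (F G : ps) : ps2 := fun a b => F a * G b.

(* for a polynomial p = sum_{i=0}^d mu_{2d-2i} x^i, mu_coef p d k = mu_k,
   with mu_k = 0 for indices outside this range *)
Definition mu_coef (p : {poly K}) (d k : nat) : K :=
  if odd k then 0 else if (k./2 <= d)%N then p`_(d - k./2) else 0.

(* bivariate polynomials in x1, x2 : x1 is the outer variable *)
Definition x1 : {poly {poly K}} := 'X.
Definition x2 : {poly {poly K}} := ('X)%:P.

Definition Hpoly (mu : nat -> K) (h : nat) : {poly {poly K}} :=
  \sum_(i < h.+1) (x1 * x2) ^+ i *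
     ((2 * mu (4 * h + 2 - 4 * i)%N)%:P%:P + (mu (4 * h - 4 * i)%N)%:P%:P * (x1 + x2)).

(* (z1 z2)^N * P(z1^-2, z2^-2), as a power series in z1, z2; this is exact
   when P has degree <= N/2 in each variable (true for the uses below). *)
Definition zsubst (N : nat) (P : {poly {poly K}}) : ps2 :=
  fun a b =>
    if [&& (a <= N)%N, (b <= N)%N, ~~ odd (N - a) & ~~ odd (N - b)]
    then (P`_((N - a)./2))`_((N - b)./2) else 0.

(* The expansion
     ( 1/(2(x1-x2)^2) + H(x1,x2)/(4(x1-x2)^2 y1 y2) ) dx1 dx2
        = ( 1/(z1-z2)^2 + sum_{i,j>=1} q_ij z1^(i-1) z2^(j-1) ) dz1 dz2,
   with x_k = z_k^-2 and y_k = z_k^-(2h+1) F(z_k), F(0) = 1, multiplied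
   through by (z1^2 - z2^2)^2 F(z1) F(z2):
     2 z1 z2 F1 F2 + (z1 z2)^(2h+2) H(z1^-2, z2^-2)
        = (z1 + z2)^2 F1 F2 + (z1^2 - z2^2)^2 F1 F2 * sum_{i,j>=1} q_ij z1^(i-1) z2^(j-1). *)
Definition is_expansion (h : nat) (F : ps) (H : {poly {poly K}})
    (q : nat -> nat -> K) : Prop :=
  let FF := ps2_tensor F F in
  let lhs := ps2_add (ps2_mul (ps2_mono 2 1 1) FF) (zsubst (2 * h + 2) H) in
  let sq_sum := ps2_add (ps2_mono 1 2 0)
                  (ps2_add (ps2_mono 2 1 1) (ps2_mono 1 0 2)) in
  let dif4 := ps2_add (ps2_mono 1 4 0)
                (ps2_add (ps2_mono (-2) 2 2) (ps2_mono 1 0 4)) in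
  let rhs := ps2_add (ps2_mul sq_sum FF)
               (ps2_mul (ps2_mul dif4 FF) (fun a b => q a.+1 b.+1)) in
  forall a b, lhs a b = rhs a b.

Variable g : nat.
Variable alpha_ : 'I_(2 * g - 1) -> K.
Variable alpha : K.

Definition f_gm1 : {poly K} := \prod_(j < 2 * g - 1) ('X - (alpha_ j)%:P).
Definition f_g : {poly K} := ('X - alpha%:P) ^+ 2 * f_gm1.

Definition mu_tilde (k : nat) : K := mu_coef f_gm1 (2 * g - 1) k.
Definition mu (k : nat) : K := mu_coef f_g (2 * g + 1) k.

Definition H_g : {poly {poly K}} := Hpoly mu g.
Definition H_gm1 : {poly {poly K}} := Hpoly mu_tilde g.-1.

Definition F0_square : {poly K} := \prod_(j < 2 * g - 1) (1 - (alpha_ j)%:P * 'X ^+ 2).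

Definition F_of (F0 : ps) : ps := ps_mul (ps_of_poly (1 - alpha%:P * 'X ^+ 2)) F0.

Definition Lambda (n : nat) : K :=
  (2 * alpha ^+ n + \sum_(j < 2 * g - 1) alpha_ j ^+ n) / (2 * n)%:R.

End Series.

From HB Require Import structures.
From mathcomp Require Import all_boot all_order all_algebra.
From mathcomp Require Import reals complex.
From mathcomp Require Import boolp ring zify.

(* Substituting x = z^-2 and clearing the denominators (z1^2 - z2^2)^2 F(z1) F(z2),
   both expansions become identities between formal power series in z1, z2.
   Since f_g = (x - alpha)^2 f_(g-1), the sequence (mu_(2m))_m is obtained from
   (mu~_(2m))_m by multiplication with (1 - alpha t)^2, and F = (1 - alpha z^2) F_0.
   Hence (1 - alpha z1^2)(1 - alpha z2^2) times the identity for g - 1 minus the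
   identity for g collapses to
     (z1^2 - z2^2)^2 F(z1) F(z2) Q = - alpha (z1^2 - z2^2)^2 sum_k mu~_(4k) (z1 z2)^(2k),
   where Q = sum_(i,j) Q_(i+1,j+1) z1^i z2^j.  The series
   E(z) = exp (sum_n Lambda_n z^(2n)) is the inverse of F, because z E'/E and
   -z F'/F both equal sum_n (2 alpha^n + sum_j alpha_j^n) z^(2n).  Cancelling
   (z1^2 - z2^2)^2 and multiplying by E(z1) E(z2) expresses Q through E, whose
   coefficient of z^(2n) is s_(n)(Lambda). *)

Set Implicit Arguments.
Unset Strict Implicit.
Unset Printing Implicit Defensive.

Import Order.TTheory GRing.Theory Num.Theory.
Local Open Scope ring_scope.

Definition fps (R : Type) := nat -> R.

Section FpsRing.
Variable R : comNzRingType.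
Implicit Types f g h : fps R.

HB.instance Definition _ := Choice.copy (fps R) (nat -> R).

Definition fps_add f g : fps R := fun n => f n + g n.
Definition fps_opp f : fps R := fun n => - f n.
Definition fps_mul f g : fps R := fun n => \sum_(k < n.+1) f k * g (n - k)%N.
Definition fps_one : fps R := fun n => (n == 0)%:R.

Lemma fps_addA : associative fps_add.
Proof. by move=> f g h; apply/funext=> n; rewrite /fps_add addrA. Qed.
Lemma fps_addC : commutative fps_add.
Proof. by move=> f g; apply/funext=> n; rewrite /fps_add addrC. Qed.
Lemma fps_add0 : left_id (fun=> 0) fps_add.
Proof. by move=> f; apply/funext=> n; rewrite /fps_add add0r. Qed.
Lemma fps_addN : left_inverse (fun=> 0) fps_opp fps_add.
Proof. by move=> f; apply/funext=> n; rewrite /fps_add /fps_opp addNr. Qed.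

HB.instance Definition _ :=
  GRing.isZmodule.Build (fps R) fps_addA fps_addC fps_add0 fps_addN.

Lemma fps_mul_poly f g (p q : {poly R}) n :
  (forall k, (k <= n)%N -> f k = p`_k) -> (forall k, (k <= n)%N -> g k = q`_k) ->
  fps_mul f g n = (p * q)`_n.
Proof.
move=> fp gq; rewrite coefM; apply: eq_bigr => -[k /= lt_kn] _.
by rewrite fp // gq // leq_subr.
Qed.

Lemma coef_poly_trunc f N k : (k < N)%N -> f k = (\poly_(i < N) f i)`_k.
Proof. by rewrite coef_poly => ->. Qed.

(* Coefficients up to [n] of a product only depend on coefficients up to [n],
   so associativity and commutativity are inherited from polynomials. *)
Lemma fps_mul_trunc f g N n : (n < N)%N ->
  fps_mul f g n = (\poly_(i < N) f i * \poly_(i < N) g i)`_n.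
Proof.
move=> lt_nN; apply: fps_mul_poly => k le_kn.
all: exact/coef_poly_trunc/(leq_ltn_trans le_kn).
Qed.

Lemma fps_mulA : associative fps_mul.
Proof.
move=> f g h; apply/funext=> n; pose P (u : fps R) := \poly_(i < n.+1) u i.
rewrite (fps_mul_poly (p := P f) (q := P g * P h)); last 2 first.
- by move=> k le_kn; apply: coef_poly_trunc.
- by move=> k le_kn; apply: fps_mul_trunc.
rewrite (fps_mul_poly (p := P f * P g) (q := P h)); last 2 first.
- by move=> k le_kn; apply: fps_mul_trunc.
- by move=> k le_kn; apply: coef_poly_trunc.
by rewrite mulrA.
Qed.

Lemma fps_mulC : commutative fps_mul.
Proof.
by move=> f g; apply/funext=> n; rewrite !(fps_mul_trunc _ _ (ltnSn n)) mulrC.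
Qed.

Lemma fps_mul1 : left_id fps_one fps_mul.
Proof.
move=> f; apply/funext=> n; rewrite /fps_mul big_ord_recl subn0 mul1r big1 ?addr0 //.
by move=> i _; rewrite mul0r.
Qed.

Lemma fps_mulDl : left_distributive fps_mul fps_add.
Proof.
move=> f g h; apply/funext=> n; rewrite /fps_mul /fps_add -big_split /=.
by apply: eq_bigr => i _; rewrite mulrDl.
Qed.

Lemma fps_one_neq0 : fps_one != 0.
Proof. by apply/eqP => /(congr1 (fun f : fps R => f 0%N)) /eqP; rewrite oner_eq0. Qed.

HB.instance Definition _ := GRing.Zmodule_isComNzRing.Build (fps R)
  fps_mulA fps_mulC fps_mul1 fps_mulDl fps_one_neq0.

Lemma fpsD f g n : (f + g) n = f n + g n. Proof. by []. Qed.
Lemma fpsN f n : (- f) n = - f n. Proof. by []. Qed.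
Lemma fpsB f g n : (f - g) n = f n - g n. Proof. by []. Qed.
Lemma fps1 n : (1 : fps R) n = (n == 0)%:R. Proof. by []. Qed.
Lemma fpsM f g n : (f * g) n = \sum_(k < n.+1) f k * g (n - k)%N. Proof. by []. Qed.

Lemma fps_sum I r (P : pred I) (F : I -> fps R) n :
  (\sum_(i <- r | P i) F i) n = \sum_(i <- r | P i) F i n.
Proof. by elim/big_rec2: _ => // i y1 y2 _ <-. Qed.

Lemma fpsM_ext f g f' g' n :
  (forall k, (k <= n)%N -> f k = f' k) -> (forall k, (k <= n)%N -> g k = g' k) ->
  (f * g) n = (f' * g') n.
Proof.
move=> ff' gg'; apply: eq_bigr => -[k /= lt_kn] _.
by rewrite ff' // gg' // leq_subr.
Qed.

Lemma fps_expr_lt f m n : f 0%N = 0 -> (n < m)%N -> (f ^+ m) n = 0.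
Proof.
move=> f0; elim: m n => [|m IHm] n //; rewrite ltnS => nm.
rewrite exprS fpsM big1 // => -[[|k] /= lt_kn] _; first by rewrite f0 mul0r.
by rewrite IHm ?mulr0 //; lia.
Qed.

Lemma fps_lreg f : GRing.lreg (f 0%N) -> GRing.lreg f.
Proof.
move=> f0 X Y fXY; apply/funext => n; elim/ltn_ind: n => n IHn.
have := congr1 (fun h : fps R => h n) fXY; rewrite !fpsM !big_ord_recl !subn0.
rewrite (eq_bigr (fun i : 'I_n => f (bump 0 i) * Y (n - bump 0 i)%N)).
  by move/addIr; apply: f0.
by move=> -[i lt_in] _; rewrite IHn //= /bump; lia.
Qed.

Definition fpsC (c : R) : fps R := fun n => if n == 0%N then c else 0.

Lemma fpsCM c f n : (fpsC c * f) n = c * f n.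
Proof.
rewrite fpsM big_ord_recl subn0 big1 ?addr0 // => i _.
by rewrite /fpsC mul0r.
Qed.

Lemma fpsC_is_zmod_morphism : zmod_morphism fpsC.
Proof.
by move=> a b; apply/funext => n; rewrite fpsB /fpsC; case: eqP; rewrite ?subr0.
Qed.

Lemma fpsC_is_monoid_morphism : monoid_morphism fpsC.
Proof.
split; first by apply/funext => -[].
by move=> a b; apply/funext => n; rewrite fpsCM /fpsC; case: eqP; rewrite ?mulr0.
Qed.

HB.instance Definition _ := GRing.isZmodMorphism.Build R (fps R) fpsC
  fpsC_is_zmod_morphism.
HB.instance Definition _ := GRing.isMonoidMorphism.Build R (fps R) fpsC
  fpsC_is_monoid_morphism.

Definition fpsX : fps R := fun n => (n == 1%N)%:R.

Lemma fpsXnM m f n : (fpsX ^+ m * f) n = if (m <= n)%N then f (n - m)%N else 0.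
Proof.
elim: m f n => [|m IHm] f n; first by rewrite expr0 mul1r subn0.
rewrite exprSr -mulrA IHm fpsM big_ord_recl mul0r add0r.
case: (ltngtP m n) => [lt_mn | // | <-]; last by rewrite subnn big_ord0.
rewrite -(subnSK lt_mn) big_ord_recl /= mul1r big1 ?addr0.
  by rewrite /bump /= subSS subn0.
by move=> i _; rewrite /fpsX /= mul0r.
Qed.

Lemma fpsXn m n : (fpsX ^+ m : fps R) n = (n == m)%:R.
Proof.
rewrite -[fpsX ^+ m]mulr1 fpsXnM fps1; case: leqP => [le_mn | lt_nm].
  by rewrite subn_eq0 eqn_leq le_mn andbT.
by rewrite ltn_eqF.
Qed.

End FpsRing.

Arguments fpsC {R} c.
Arguments fpsX {R}.

Lemma fps_lreg_neq0 (R : idomainType) (f : fps R) : f 0%N != 0 -> GRing.lreg f.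
Proof. by move=> f0; apply/fps_lreg/lregP. Qed.

Section BigOrd.
Variable V : nmodType.
Implicit Types F : nat -> V.

Lemma big_ord_vanish N M F : (N <= M)%N -> (forall m, (N <= m)%N -> F m = 0) ->
  \sum_(m < M) F m = \sum_(m < N) F m.
Proof.
move=> le_NM F0; rewrite (big_ord_widen _ F le_NM) [RHS]big_mkcond /=.
by apply: eq_bigr => i _; case: ltnP => // /F0.
Qed.

Lemma big_ord_double n F : \sum_(m < n.*2) F m = \sum_(k < n) (F k.*2 + F k.*2.+1).
Proof.
elim: n => [|n IHn]; first by rewrite !big_ord0.
by rewrite doubleS !big_ord_recr /= IHn addrA.
Qed.

Lemma big_ord_double_even n F : (forall k, odd k -> F k = 0) ->
  \sum_(k < n.*2.+1) F k = \sum_(k < n.+1) F k.*2.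
Proof.
move=> Fodd; have := big_ord_double n.+1 F.
rewrite doubleS big_ord_recr /= Fodd /= ?odd_double // addr0 => ->.
by apply: eq_bigr => k _; rewrite (Fodd k.*2.+1) /= ?odd_double // addr0.
Qed.

End BigOrd.

Definition fps_map (R S : comNzRingType) (f : R -> S) (F : fps R) : fps S :=
  fun n => f (F n).

Section FpsMap.
Variables (R S : comNzRingType) (f : {rmorphism R -> S}).

Lemma fps_map_is_zmod_morphism : zmod_morphism (fps_map f).
Proof. by move=> F G; apply/funext => n; rewrite /fps_map !fpsB rmorphB. Qed.

Lemma fps_map_is_monoid_morphism : monoid_morphism (fps_map f).
Proof.
split; first by apply/funext => n; rewrite /fps_map !fps1 rmorph_nat.
move=> F G; apply/funext => n; rewrite /fps_map !fpsM rmorph_sum.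
by apply: eq_bigr => k _; rewrite rmorphM.
Qed.

HB.instance Definition _ := GRing.isZmodMorphism.Build (fps R) (fps S) (fps_map f)
  fps_map_is_zmod_morphism.
HB.instance Definition _ := GRing.isMonoidMorphism.Build (fps R) (fps S) (fps_map f)
  fps_map_is_monoid_morphism.

End FpsMap.

(* A series in two variables is a series in [z1] whose coefficients are series
   in [z2]: [A a b] is the coefficient of [z1^a z2^b].  Thus [z1] is [fpsX], a
   series [F] in [z2] is the constant [fpsC F], and [F(z1)] is [fps_map fpsC F]. *)
Section TwoVariables.
Variable R : comNzRingType.
Local Notation fps2 := (fps (fps R)).
Local Notation z1 := (fpsX : fps2).
Local Notation z2 := (fpsC (fpsX : fps R)).

Lemma fps2_tensor (F G : fps R) a b : (fps_map fpsC F * fpsC G) a b = F a * G b.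
Proof. by rewrite mulrC fpsCM mulrC fpsCM. Qed.

Lemma fps2_cstM (c : R) (X : fps2) a b : (fpsC (fpsC c) * X) a b = c * X a b.
Proof. by rewrite !fpsCM. Qed.

Lemma fps2_z2nM e (X : fps2) a b :
  (z2 ^+ e * X) a b = if (e <= b)%N then X a (b - e)%N else 0.
Proof. by rewrite -rmorphXn fpsCM fpsXnM. Qed.

Lemma fps_map_fpsC_X : fps_map fpsC (fpsX : fps R) = z1.
Proof. by apply/funext => a; rewrite /fps_map rmorph_nat. Qed.

Lemma fps_map_fpsC_C (c : R) : fps_map fpsC (fpsC c) = fpsC (fpsC c).
Proof.
by apply/funext => -[|a] //; apply/funext => b; rewrite /fps_map /fpsC /=; case: eqP.
Qed.

Lemma lreg_z1sqBz2sq : GRing.lreg (z1 ^+ 2 - z2 ^+ 2).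
Proof.
suff reg0 X : (z1 ^+ 2 - z2 ^+ 2) * X = 0 -> X = 0.
  move=> X Y /eqP; rewrite -subr_eq0 -mulrBr => /eqP /reg0 /eqP.
  by rewrite subr_eq0 => /eqP.
move=> eq0; apply/funext => a; apply/funext => b; elim/ltn_ind: b a => b IHb a.
have := congr1 (fun Y : fps2 => Y a.+2 b) eq0.
rewrite mulrBl fpsB fpsB fpsXnM fps2_z2nM /= subn2 /=.
case: ltnP => lt1b; last by rewrite subr0.
by rewrite (IHb (b - 2)%N) ?subr0 //; lia.
Qed.

End TwoVariables.

Definition eulerD (R : comNzRingType) (f : fps R) : fps R := fun n => n%:R * f n.

Section EulerOperator.
Variable R : comNzRingType.
Implicit Types f g : fps R.

Lemma eulerDM f g : eulerD (f * g) = eulerD f * g + f * eulerD g.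
Proof.
apply/funext => n; rewrite /eulerD fpsD !fpsM mulr_sumr -big_split /=.
apply: eq_bigr => -[k /= lt_kn] _.
rewrite -{1}(subnKC (ltnSE lt_kn)) natrD mulrDl; congr (_ + _); first exact: mulrA.
exact: mulrCA.
Qed.

Lemma eulerDC (c : R) : eulerD (fpsC c) = 0.
Proof. by apply/funext => -[|n]; rewrite /eulerD /fpsC ?mul0r ?mulr0. Qed.

Lemma eulerD1 : eulerD (1 : fps R) = 0.
Proof. by rewrite -(rmorph1 fpsC) eulerDC. Qed.

Lemma eulerDX f m : eulerD (f ^+ m.+1) = (f ^+ m * eulerD f) *+ m.+1.
Proof.
elim: m => [|m IHm]; first by rewrite expr1 expr0 mul1r.
by rewrite exprS eulerDM IHm [in RHS]mulrS mulrnAr mulrA -exprS mulrC.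
Qed.

Lemma eulerD_prod I (r : seq I) (F G : I -> fps R) :
  (forall i, eulerD (F i) = F i * G i) ->
  eulerD (\prod_(i <- r) F i) = (\prod_(i <- r) F i) * \sum_(i <- r) G i.
Proof.
move=> DF; elim: r => [|i r IHr]; first by rewrite !big_nil eulerD1 mulr0.
by rewrite !big_cons eulerDM DF IHr; ring.
Qed.

End EulerOperator.

Section CharZero.
Variable K : fieldType.
Hypothesis K0 : [pchar K] =i pred0.
Implicit Types f g L : fps K.

Lemma natf_neq0S n : (n.+1%:R : K) != 0.
Proof. by move/pcharf0P: K0 => ->. Qed.

Lemma eulerD_eq0 f : eulerD f = 0 -> f = fpsC (f 0%N).
Proof.
move=> Df0; apply/funext => -[|n] //; have /eqP := congr1 (fun h : fps K => h n.+1) Df0.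
by rewrite /eulerD mulf_eq0 (negbTE (natf_neq0S n)) => /eqP.
Qed.

Lemma eulerD_mul_eq1 (E F G : fps K) : E 0%N * F 0%N = 1 ->
  eulerD E = G * E -> eulerD F = - (G * F) -> E * F = 1.
Proof.
move=> EF0 DE DF; have /eulerD_eq0 -> : eulerD (E * F) = 0.
  by rewrite eulerDM DE DF; ring.
by rewrite fpsM big_ord1 EF0 rmorph1.
Qed.

Lemma ps_powE L m : ps_pow L m = L ^+ m.
Proof.
elim: m => [|m IHm] /=; last by rewrite IHm exprS.
by apply/funext => n; rewrite expr0 fps1; case: (n == 0%N).
Qed.

Lemma ps_exp_trunc L N n : L 0%N = 0 -> (n < N)%N ->
  ps_exp L n = (\sum_(m < N) fpsC (m`!%:R^-1) * L ^+ m) n.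
Proof.
move=> L0 lt_nN; rewrite fps_sum.
rewrite (big_ord_vanish (N := n.+1)
  (F := fun m => (fpsC (m`!%:R^-1) * L ^+ m) n)) //.
  by apply: eq_bigr => m _; rewrite fpsCM ps_powE mulrC.
by move=> m lt_nm; rewrite fpsCM fps_expr_lt ?mulr0.
Qed.

Lemma ps_exp0 L : ps_exp L 0%N = 1.
Proof. by rewrite /ps_exp big_ord1 ps_powE expr0 fps1 divr1. Qed.

(* Termwise, [eulerD (L^(m+1) / (m+1)!) = eulerD L * L^m / m!]. *)
Lemma eulerD_ps_exp L : L 0%N = 0 -> eulerD (ps_exp L) = eulerD L * ps_exp L.
Proof.
move=> L0; apply/funext => n.
pose T N := \sum_(m < N) fpsC (m`!%:R^-1) * L ^+ m.
have DT N : eulerD L * T N = \sum_(m < N.+1) fpsC (m`!%:R^-1) * eulerD (L ^+ m).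
  rewrite big_ord_recl expr0 eulerD1 mulr0 add0r mulr_sumr.
  apply: eq_bigr => m _.
  have fact_inv : (m.+1`!%:R^-1 *+ m.+1 : K) = m`!%:R^-1.
    rewrite factS natrM invfM -mulrnAl -[_ *+ m.+1]mulr_natr.
    by rewrite mulVf ?natf_neq0S ?mul1r.
  rewrite lift0 eulerDX mulrnAr -mulrnAl -rmorphMn fact_inv; ring.
rewrite (fpsM_ext (f' := eulerD L) (g' := T n.+1)) //; last first.
  by move=> k kn; apply: ps_exp_trunc.
rewrite DT fps_sum big_ord_recr /= fpsCM /eulerD fps_expr_lt // !mulr0 addr0.
rewrite /ps_exp mulr_sumr; apply: eq_bigr => m _; rewrite fpsCM ps_powE; ring.
Qed.

End CharZero.

Section CompX2.
Variable R : comNzRingType.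
Implicit Types f g : fps R.

Definition fps_compX2 f : fps R := fun n => if odd n then 0 else f n./2.

Lemma fps_compX2_double f m : fps_compX2 f m.*2 = f m.
Proof. by rewrite /fps_compX2 odd_double doubleK. Qed.

Lemma fps_compX2_odd f m : odd m -> fps_compX2 f m = 0.
Proof. by rewrite /fps_compX2 => ->. Qed.

Lemma fps_compX2_is_zmod_morphism : zmod_morphism fps_compX2.
Proof.
by move=> f g; apply/funext => n; rewrite /fps_compX2 !fpsB; case: odd; rewrite ?subr0.
Qed.

Lemma fps_compX2_is_monoid_morphism : monoid_morphism fps_compX2.
Proof.
split; first by apply/funext => -[|[|n]] //=; rewrite /fps_compX2 /=; case: odd.
move=> f g; apply/funext => n; rewrite fpsM; have [n_odd | n_even] := boolP (odd n).
  rewrite fps_compX2_odd // big1 // => -[k /= lt_kn] _.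
  have [k_odd | k_even] := boolP (odd k); first by rewrite fps_compX2_odd ?mul0r.
  by rewrite [fps_compX2 g _]fps_compX2_odd ?mulr0 // oddB ?n_odd ?(negbTE k_even).
rewrite -[n]odd_double_half (negbTE n_even) add0n fps_compX2_double fpsM.
pose F k := fps_compX2 f k * fps_compX2 g (n./2.*2 - k)%N.
rewrite (@big_ord_double_even _ _ F) => [|k k_odd]; last first.
  by rewrite /F fps_compX2_odd ?mul0r.
by apply: eq_bigr => k _; rewrite /F -doubleB !fps_compX2_double.
Qed.

HB.instance Definition _ := GRing.isZmodMorphism.Build (fps R) (fps R) fps_compX2
  fps_compX2_is_zmod_morphism.
HB.instance Definition _ := GRing.isMonoidMorphism.Build (fps R) (fps R) fps_compX2
  fps_compX2_is_monoid_morphism.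

Lemma eulerD_compX2 f : eulerD (fps_compX2 f) = 2 * fps_compX2 (eulerD f).
Proof.
apply/funext => n; rewrite -(rmorph_nat fpsC) fpsCM /eulerD /fps_compX2.
case: ifPn => [_|n_even]; rewrite ?mulr0 //.
have {1}-> : n = (n./2 * 2)%N by rewrite muln2 -[LHS]odd_double_half (negbTE n_even).
by rewrite natrM; ring.
Qed.

End CompX2.

Section GeomX2.
Variable R : comNzRingType.

(* [geomX2 a = a z^2 / (1 - a z^2)]. *)
Definition geomX2 (a : R) : fps R :=
  fun n => if odd n || (n == 0%N) then 0 else a ^+ n./2.

Lemma eulerD_1subX2 (a : R) :
  eulerD (1 - fpsC a * fpsX ^+ 2) = - (2 * ((1 - fpsC a * fpsX ^+ 2) * geomX2 a)).
Proof.
apply/funext => n; rewrite fpsN -(rmorph_nat fpsC) fpsCM /eulerD mulrBl mul1r.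
rewrite !fpsB fps1 -mulrA !fpsCM fpsXnM fpsXn /geomX2.
case: n => [|[|[|n]]] /=; rewrite ?(mulr0, mul0r, subr0, oppr0, mulr1, expr1) //.
  by rewrite sub0r mulrN.
rewrite !subSS subn0 !negbK; case: odd => /=; rewrite ?(subr0, mulr0, oppr0) //.
by rewrite exprS subrr mulr0 oppr0.
Qed.

End GeomX2.

Section SqrtLogDerivative.
Variable K : fieldType.
Hypothesis K0 : [pchar K] =i pred0.

Lemma eulerD_sqrt_prod I (r : seq I) (a : I -> K) (F : fps K) : F 0%N = 1 ->
  F * F = \prod_(j <- r) (1 - fpsC (a j) * fpsX ^+ 2) ->
  eulerD F = - (F * \sum_(j <- r) geomX2 (a j)).
Proof.
move=> F0 FF; set G := \sum_(j <- r) geomX2 (a j).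
have DFF : eulerD (F * F) = F * F * - (2 * G).
  have D1subX2 j : eulerD (1 - fpsC (a j) * fpsX ^+ 2)
      = (1 - fpsC (a j) * fpsX ^+ 2) * - (2 * geomX2 (a j)).
    by rewrite eulerD_1subX2 mulrN mulrCA.
  by rewrite FF (eulerD_prod _ D1subX2) /G sumrN mulr_sumr.
have lreg2 : GRing.lreg (2 : fps K).
  by apply: fps_lreg_neq0; rewrite -(rmorph_nat fpsC) /fpsC /= natf_neq0S.
apply: (@fps_lreg_neq0 _ F); first by rewrite F0 oner_neq0.
apply: lreg2; rewrite eulerDM in DFF.
by transitivity (eulerD F * F + F * eulerD F); [ring | rewrite DFF; ring].
Qed.

End SqrtLogDerivative.

Section PolyToSeries.
Variable K : fieldType.

Lemma ps_of_poly_is_zmod_morphism :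
  zmod_morphism (@ps_of_poly K : {poly K} -> fps K).
Proof. by move=> p q; apply/funext => n; rewrite fpsB /ps_of_poly coefB. Qed.

Lemma ps_of_poly_is_monoid_morphism :
  monoid_morphism (@ps_of_poly K : {poly K} -> fps K).
Proof.
split; first by apply/funext => n; rewrite fps1 /ps_of_poly coef1.
by move=> p q; apply/funext => n; rewrite fpsM /ps_of_poly coefM.
Qed.

HB.instance Definition _ := GRing.isZmodMorphism.Build {poly K} (fps K)
  (@ps_of_poly K : {poly K} -> fps K) ps_of_poly_is_zmod_morphism.
HB.instance Definition _ := GRing.isMonoidMorphism.Build {poly K} (fps K)
  (@ps_of_poly K : {poly K} -> fps K) ps_of_poly_is_monoid_morphism.

Lemma ps_of_poly_1subX2 (a : K) :
  ps_of_poly (1 - a%:P * 'X ^+ 2) = 1 - fpsC a * fpsX ^+ 2.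
Proof.
apply/funext => n; rewrite fpsB fps1 fpsCM fpsXn.
by rewrite /ps_of_poly coefB coef1 coefCM coefXn.
Qed.

End PolyToSeries.

Section HBasis.
Variable R : comNzRingType.
Local Notation fps2 := (fps (fps R)).
Local Notation z1 := (fpsX : fps2).
Local Notation z2 := (fpsC (fpsX : fps R)).
Local Notation cst2 c := (fpsC (fpsC c)).

(* [Hbasis m] is the image under [zsubst] of the part of [H] carrying [mu_(2m)]. *)
Definition Hbasis (m : nat) : fps2 :=
  if odd m then 2 * (z1 ^+ 2 * z2 ^+ 2) ^+ (m./2).+1
  else (z1 ^+ 2 * z2 ^+ 2) ^+ m./2 * (z1 ^+ 2 + z2 ^+ 2).

Definition Hsum (p : nat -> R) (N : nat) : fps2 := \sum_(m < N) cst2 (p m) * Hbasis m.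

Lemma Hbasis_even k : Hbasis k.*2 = (z1 ^+ 2 * z2 ^+ 2) ^+ k * (z1 ^+ 2 + z2 ^+ 2).
Proof. by rewrite /Hbasis odd_double doubleK. Qed.

Lemma Hbasis_odd k : Hbasis k.*2.+1 = 2 * (z1 ^+ 2 * z2 ^+ 2) ^+ k.+1.
Proof. by rewrite /Hbasis /= odd_double /= uphalf_double. Qed.

(* The coefficients of [(1 - a t)^2 * sum_m p m t^m]. *)
Definition coef_mul_1subX_sq (a : R) (p : nat -> R) (m : nat) : R :=
  p m - 2 * a * (if m is m'.+1 then p m' else 0)
  + a ^+ 2 * (if m is m'.+2 then p m' else 0).

Lemma Hsum_mul_1subX_sq (a : R) (p : nat -> R) (n : nat) :
  (forall m, (n.*2 <= m)%N -> p m = 0) ->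
  (1 - cst2 a * z1 ^+ 2) * (1 - cst2 a * z2 ^+ 2) * Hsum p n.*2
    - Hsum (coef_mul_1subX_sq a p) n.*2.+2
  = - (cst2 a * (z1 ^+ 2 - z2 ^+ 2) ^+ 2
       * \sum_(k < n) cst2 (p k.*2) * (z1 ^+ 2 * z2 ^+ 2) ^+ k).
Proof.
move=> p_vanish.
pose p1 m := if m is m'.+1 then p m' else 0.
pose p2 m := if m is m'.+2 then p m' else 0.
have shift0 : \sum_(m < n.*2.+2) cst2 (p m) * Hbasis m = Hsum p n.*2.
  rewrite -addn2 (big_ord_vanish (N := n.*2)
    (F := fun m => cst2 (p m) * Hbasis m)) ?leq_addr //.
  by move=> m le_nm; rewrite p_vanish ?rmorph0 ?mul0r.
have shift1 : \sum_(m < n.*2.+2) cst2 (p1 m) * Hbasis m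
    = \sum_(m < n.*2) cst2 (p m) * Hbasis m.+1.
  rewrite big_ord_recl; under eq_bigr => i _ do rewrite lift0.
  rewrite /p1 /= !rmorph0 mul0r add0r -addn1.
  rewrite (big_ord_vanish (N := n.*2)
    (F := fun m => cst2 (p m) * Hbasis m.+1)) ?leq_addr //.
  by move=> m le_nm; rewrite p_vanish ?rmorph0 ?mul0r.
have shift2 : \sum_(m < n.*2.+2) cst2 (p2 m) * Hbasis m
    = \sum_(m < n.*2) cst2 (p m) * Hbasis m.+2.
  rewrite !big_ord_recl; under eq_bigr => i _ do rewrite !lift0.
  by rewrite /p2 /= !rmorph0 !mul0r !add0r.
have -> : Hsum (coef_mul_1subX_sq a p) n.*2.+2 = Hsum p n.*2
    - 2 * cst2 a * \sum_(m < n.*2) cst2 (p m) * Hbasis m.+1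
    + cst2 a ^+ 2 * \sum_(m < n.*2) cst2 (p m) * Hbasis m.+2.
  rewrite -shift0 -shift1 -shift2 /Hsum !mulr_sumr -sumrB -big_split /=.
  apply: eq_bigr => m _; rewrite /coef_mul_1subX_sq !rmorphD !rmorphN !rmorphM.
  by rewrite !rmorph_nat /p1 /p2; ring.
rewrite /Hsum (big_ord_double _ (fun m => cst2 (p m) * Hbasis m)).
rewrite (big_ord_double _ (fun m => cst2 (p m) * Hbasis m.+1)).
rewrite (big_ord_double _ (fun m => cst2 (p m) * Hbasis m.+2)).
rewrite !mulr_sumr -sumrB -big_split /= -sumrB -sumrN; apply: eq_bigr => k _.
by rewrite -doubleS !Hbasis_even !Hbasis_odd !exprS; ring.
Qed.

End HBasis.

Arguments Hbasis {R} m.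

Section Expansion.
Variable K : fieldType.
Local Notation fps2 := (fps (fps K)).
Local Notation z1 := (fpsX : fps2).
Local Notation z2 := (fpsC (fpsX : fps K)).
Local Notation cst2 c := (fpsC (fpsC c)).

Lemma ps2_addE (A B : ps2 K) : ps2_add A B = (A : fps2) + B.
Proof. by []. Qed.

Lemma ps2_mulE (A B : ps2 K) : ps2_mul A B = (A : fps2) * B.
Proof.
apply/funext => a; apply/funext => b; rewrite fpsM fps_sum.
by apply: eq_bigr => i _; rewrite fpsM.
Qed.

Lemma ps2_monoE (c : K) e1 e2 : ps2_mono c e1 e2 = cst2 c * z1 ^+ e1 * z2 ^+ e2.
Proof.
apply/funext => a; apply/funext => b.
rewrite -fps_map_fpsC_X -!rmorphXn -mulrA fps2_cstM fps2_tensor !fpsXn /ps2_mono.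
by case: eqP; case: eqP; rewrite /= ?mulr1 ?mulr0.
Qed.

Lemma is_expansion_fps2 h (F : fps K) (H : {poly {poly K}}) q :
  is_expansion h F H q ->
  let FF : fps2 := fps_map fpsC F * fpsC F in
  (z1 ^+ 2 - z2 ^+ 2) ^+ 2 * FF * (fun a b => q a.+1 b.+1)
  = 2 * (z1 * z2) * FF + zsubst (2 * h + 2) H - (z1 + z2) ^+ 2 * FF.
Proof.
rewrite /is_expansion; cbv zeta => expansion.
have FFE : ps2_tensor F F = fps_map fpsC F * fpsC F.
  by apply/funext => a; apply/funext => b; rewrite fps2_tensor.
have {}expansion := funext (fun a => funext (fun b => expansion a b)).
rewrite !ps2_addE !ps2_mulE !ps2_monoE FFE in expansion.
match type of expansion with ?l = ?r => change (@eq fps2 l r) in expansion end.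
rewrite (canRL (addKr _) expansion).
by rewrite !rmorphN !rmorph1 !rmorph_nat; ring.
Qed.

Lemma zsubstD N P Q : zsubst N (P + Q) = (zsubst N P : fps2) + zsubst N Q.
Proof.
apply/funext => a; apply/funext => b; rewrite !fpsD /zsubst.
by case: ifP; rewrite ?coefD ?addr0.
Qed.

Lemma zsubst_sum N I r (P : pred I) (F : I -> {poly {poly K}}) :
  zsubst N (\sum_(i <- r | P i) F i) = \sum_(i <- r | P i) (zsubst N (F i) : fps2).
Proof.
apply: (big_morph (zsubst N : _ -> fps2) (zsubstD N)).
by apply/funext => a; apply/funext => b; rewrite /zsubst !coef0; case: ifP.
Qed.

Lemma zsubstCM N (c : K) P : zsubst N (c%:P%:P * P) = cst2 c * zsubst N P.
Proof.
apply/funext => a; apply/funext => b; rewrite fps2_cstM /zsubst.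
by case: ifP; rewrite ?mulr0 // !coefCM.
Qed.

Lemma zsubst_monomial N u v : (u.*2 <= N)%N -> (v.*2 <= N)%N ->
  zsubst N (x1 K ^+ u * x2 K ^+ v) = z1 ^+ (N - u.*2) * z2 ^+ (N - v.*2).
Proof.
have half_eq w a : (w.*2 <= N)%N ->
    [&& (a <= N)%N, ~~ odd (N - a) & ((N - a)./2 == w)] = (a == N - w.*2)%N.
  move=> le_wN; apply/idP/eqP => [/and3P[le_aN even_Na /eqP <-] | ->].
    by have := odd_double_half (N - a); rewrite (negbTE even_Na) add0n; lia.
  by rewrite leq_subr subKn // odd_double doubleK eqxx.
move=> le_uN le_vN; apply/funext => a; apply/funext => b.
rewrite -fps_map_fpsC_X -!rmorphXn fps2_tensor !fpsXn /zsubst /x1 /x2.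
rewrite mulrC coefCM coefXn mulr_natr coefMn coefXn.
rewrite -(half_eq _ a le_uN) -(half_eq _ b le_vN).
by case: (a <= N)%N; case: (b <= N)%N; case: odd; case: odd; case: eqP; case: eqP;
  rewrite /= ?mulr0n ?mulr1n ?mulr0 ?mul0r ?mulr1.
Qed.

Lemma zsubst_Hpoly h (mu : nat -> K) :
  zsubst (2 * h + 2) (Hpoly mu h) = Hsum (fun m => mu m.*2) h.+1.*2.
Proof.
rewrite /Hpoly zsubst_sum /Hsum.
rewrite (big_ord_double _ (fun m => cst2 (mu m.*2) * Hbasis m)).
rewrite (reindex_inj rev_ord_inj); apply: eq_bigr => -[k /= lt_kh] _.
set i := (h.+1 - k.+1)%N.
have -> : (x1 K * x2 K) ^+ i * ((2 * mu (4 * h + 2 - 4 * i)%N)%:P%:P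
          + (mu (4 * h - 4 * i)%N)%:P%:P * (x1 K + x2 K))
    = (2 * mu (4 * h + 2 - 4 * i)%N)%:P%:P * (x1 K ^+ i * x2 K ^+ i)
      + (mu (4 * h - 4 * i)%N)%:P%:P * (x1 K ^+ i.+1 * x2 K ^+ i)
      + (mu (4 * h - 4 * i)%N)%:P%:P * (x1 K ^+ i * x2 K ^+ i.+1).
  by rewrite exprMn !exprS; ring.
rewrite !zsubstD !zsubstCM !zsubst_monomial /i; try lia.
have -> : (2 * h + 2 - (h.+1 - k.+1).*2 = k.*2.+2)%N by lia.
have -> : (2 * h + 2 - (h.+1 - k.+1).+1.*2 = k.*2)%N by lia.
have -> : (4 * h + 2 - 4 * (h.+1 - k.+1) = k.*2.+1.*2)%N by lia.
have -> : (4 * h - 4 * (h.+1 - k.+1) = k.*2.*2)%N by lia.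
have sqX j (x : fps2) : x ^+ j.*2 = (x ^+ 2) ^+ j by rewrite -mul2n exprM.
have sqXS j (x : fps2) : x ^+ j.*2.+2 = x ^+ 2 * (x ^+ 2) ^+ j.
  by rewrite -doubleS sqX exprS.
have cst2M (c d : K) : cst2 (c * d) = cst2 c * cst2 d by rewrite !rmorphM.
rewrite Hbasis_even Hbasis_odd !sqXS !sqX cst2M !rmorph_nat.
match goal with |- ?l = ?r => change (@eq fps2 l r) end.
move: (fpsX ^+ 2 : fps2) (fpsC fpsX ^+ 2 : fps2) => a b.
by rewrite exprS !exprMn; ring.
Qed.

End Expansion.

Section ReversedCoefficients.
Variable R : comNzRingType.

(* The coefficients of the reversed polynomial [t^d p(1/t)]. *)
Definition revcoef (p : {poly R}) (d m : nat) : R :=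
  if (m <= d)%N then p`_(d - m) else 0.

Lemma revcoef_mulXsubC_sq (a : R) (p : {poly R}) d : (size p <= d.+1)%N ->
  forall m, revcoef (('X - a%:P) ^+ 2 * p) d.+2 m = coef_mul_1subX_sq a (revcoef p d) m.
Proof.
move=> size_p m; have p_vanish k : (d < k)%N -> p`_k = 0.
  by move=> lt_dk; apply: nth_default; apply: leq_trans lt_dk.
have -> : ('X - a%:P) ^+ 2 * p = 'X ^+ 2 * p - (2 * a) *: ('X * p) + (a ^+ 2) *: p.
  by rewrite -!mul_polyC rmorphM rmorphXn rmorph_nat; ring.
rewrite /revcoef /coef_mul_1subX_sq coefD coefB !coefZ coefXnM coefXM.
case: (leqP m d.+2) => le_md; last first.
  by case: m le_md => [|[|m]] le_md //; rewrite !ifF ?mulr0 ?subr0 ?addr0 //; lia.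
case: m le_md => [|[|m]] le_md /=.
- rewrite (p_vanish d.+1) ?subn0 ?(p_vanish d.+2) // !mulr0 subr0 !addr0.
  by rewrite subSS subSS subn0 subr0.
- rewrite subn1 (p_vanish d.+1) ?subn0 // !mulr0 !addr0.
  by case: d {size_p p_vanish le_md} => [|d] //=; rewrite !subSS !subn0.
- have le_md' : (m <= d)%N by lia.
  rewrite !subSS le_md' (_ : (d - m - 2 = d - m.+2)%N); last by lia.
  rewrite (_ : (d - m).-1 = (d - m.+1)%N); last by lia.
  by congr (_ - _ * _ + _); case: ifP => h1; case: ifP => h2 //; lia.
Qed.

End ReversedCoefficients.

Lemma mu_coef_double (K : fieldType) (p : {poly K}) d m :
  mu_coef p d m.*2 = revcoef p d m.
Proof. by rewrite /mu_coef odd_double doubleK. Qed.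

Definition fps_tail (K : fieldType) (t : nat -> K) : fps K :=
  fun i => if i is 0 then 0 else t i.

Lemma schur_subn (K : fieldType) (t : nat -> K) (i k : nat) :
  schur t (i%:Z - k%:Z) = if (k <= i)%N then ps_exp (fps_tail t) (i - k)%N else 0.
Proof.
case: leqP => [le_ki | lt_ik]; first by rewrite subzn.
by case ik: (i%:Z - k%:Z)%R => [n|n] //; lia.
Qed.

Section Proposition5.
Variable K : fieldType.
Hypothesis K0 : [pchar K] =i pred0.
Variables (g : nat) (alpha_ : 'I_(2 * g - 1) -> K) (alpha : K).
Hypothesis g_gt0 : (0 < g)%N.

Local Notation mu_tilde2 m := (mu_tilde alpha_ m.*2).

Lemma mu_tilde_double_vanish m : (g.*2 <= m)%N -> mu_tilde2 m = 0.
Proof. by move=> le_gm; rewrite /mu_tilde mu_coef_double /revcoef ifF //; lia. Qed.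

Lemma mu_double m :
  mu alpha_ alpha m.*2 = coef_mul_1subX_sq alpha (fun m => mu_tilde2 m) m.
Proof.
rewrite /mu mu_coef_double /f_g (_ : (2 * g + 1 = (2 * g - 1).+2)%N); last by lia.
rewrite revcoef_mulXsubC_sq; last first.
  by rewrite size_prod_XsubC -[index_enum _]enumT size_enum_ord.
by congr coef_mul_1subX_sq; apply/funext => k; rewrite /mu_tilde mu_coef_double.
Qed.

Local Notation E := (fps_compX2 (ps_exp (fps_tail (Lambda alpha_ alpha)))).
Local Notation G := (2 * geomX2 alpha + \sum_(j < 2 * g - 1) geomX2 (alpha_ j)).

Lemma eulerD_Lambda : eulerD (fps_compX2 (fps_tail (Lambda alpha_ alpha))) = G.
Proof.
apply/funext => m; rewrite fpsD -(rmorph_nat fpsC) fpsCM fps_sum /eulerD.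
have [m_odd | m_even] := boolP (odd m).
  by rewrite fps_compX2_odd // mulr0 /geomX2 m_odd /= big1 ?mulr0 ?addr0.
rewrite -[m]odd_double_half (negbTE m_even) add0n fps_compX2_double /geomX2.
rewrite odd_double /= doubleK; case: m./2 => [|k] /=.
  by rewrite big1 // !mulr0 addr0.
by rewrite /Lambda -mul2n mulrC divfK // mul2n natf_neq0S.
Qed.

Variables (F0 : fps K) (qg0 qgm1 : nat -> nat -> K).
Hypothesis F0_sqrt : is_sqrt_series F0 (F0_square alpha_).
Hypothesis expansion_g : is_expansion g (F_of alpha F0) (H_g alpha_ alpha) qg0.
Hypothesis expansion_gm1 : is_expansion g.-1 F0 (H_gm1 alpha_) qgm1.

Local Notation F := (F_of alpha F0 : fps K).

Lemma F_ofE : F = (1 - fpsC alpha * fpsX ^+ 2) * F0.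
Proof. by rewrite /F_of ps_of_poly_1subX2. Qed.

Lemma exp_Lambda_mul_F_of : E * F = 1.
Proof.
have [F00 F0F0] := F0_sqrt.
have F0_sq : F0 * F0 = \prod_(j < 2 * g - 1) (1 - fpsC (alpha_ j) * fpsX ^+ 2).
  apply/funext => n; transitivity (ps_of_poly (F0_square alpha_) n); first exact: F0F0.
  rewrite rmorph_prod; congr (_ n); apply: eq_bigr => j _.
  exact: ps_of_poly_1subX2.
apply: (eulerD_mul_eq1 K0 (G := G)).
- rewrite F_ofE fpsM big_ord1 fpsB fps1 fpsCM fpsXn F00 [E _]/fps_compX2 ps_exp0.
  by rewrite /= mulr0 subr0 !mul1r.
- rewrite eulerD_compX2 eulerD_ps_exp // rmorphM mulrA -eulerD_compX2.
  by rewrite eulerD_Lambda.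
rewrite F_ofE eulerDM eulerD_1subX2 (eulerD_sqrt_prod K0 F00 F0_sq); ring.
Qed.

Local Notation fps2 := (fps (fps K)).
Local Notation z1 := (fpsX : fps2).
Local Notation z2 := (fpsC (fpsX : fps K)).
Local Notation cst2 c := (fpsC (fpsC c)).

Lemma tensor_F_ofE : fps_map fpsC F * fpsC F = (1 - cst2 alpha * z1 ^+ 2)
  * (1 - cst2 alpha * z2 ^+ 2) * (fps_map fpsC F0 * fpsC F0).
Proof.
rewrite F_ofE !(rmorphM, rmorphB, rmorph1, rmorphXn) /= fps_map_fpsC_X fps_map_fpsC_C.
ring.
Qed.

Local Notation Qgm1 := ((fun a b => qgm1 a.+1 b.+1) : fps2).
Local Notation Qg := ((fun a b => qg0 a.+1 b.+1) : fps2).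
Local Notation U := ((1 - cst2 alpha * z1 ^+ 2) * (1 - cst2 alpha * z2 ^+ 2)).

(* Subtracting the expansion for [g] from [U] times the one for [g - 1], all
   terms cancel except the [zsubst] parts, whose difference is [Hsum_mul_1subX_sq]. *)
Lemma tensor_F_of_mul_Q : fps_map fpsC F * fpsC F * (Qgm1 - Qg)
  = - (cst2 alpha * \sum_(k < g) cst2 (mu_tilde2 k.*2) * (z1 ^+ 2 * z2 ^+ 2) ^+ k).
Proof.
have e0 := is_expansion_fps2 expansion_gm1.
have eg := is_expansion_fps2 expansion_g.
rewrite /H_gm1 zsubst_Hpoly prednK // in e0.
rewrite /H_g zsubst_Hpoly in eg.
have mu_sum : Hsum (fun m => mu alpha_ alpha m.*2) g.+1.*2
    = Hsum (coef_mul_1subX_sq alpha (fun m => mu_tilde2 m)) g.*2.+2.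
  by apply: eq_bigr => m _; rewrite mu_double.
apply: (@lregX _ _ 2 (@lreg_z1sqBz2sq K)).
set A := fps_map fpsC F0 * fpsC F0 in e0.
transitivity (U * ((z1 ^+ 2 - z2 ^+ 2) ^+ 2 * A * Qgm1)
  - (z1 ^+ 2 - z2 ^+ 2) ^+ 2 * (fps_map fpsC F * fpsC F) * Qg).
  by rewrite tensor_F_ofE -/A; ring.
rewrite e0 eg mu_sum tensor_F_ofE -/A.
transitivity (U * Hsum (fun m => mu_tilde2 m) g.*2
  - Hsum (coef_mul_1subX_sq alpha (fun m => mu_tilde2 m)) g.*2.+2); first ring.
by rewrite Hsum_mul_1subX_sq; [ring | exact: mu_tilde_double_vanish].
Qed.

Lemma fps2_z1z2_sqXnM k (X : fps2) a b : ((z1 ^+ 2 * z2 ^+ 2) ^+ k * X) a b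
  = if (k.*2 <= a)%N && (k.*2 <= b)%N then X (a - k.*2)%N (b - k.*2)%N else 0.
Proof.
rewrite exprMn -!exprM !mul2n -mulrA fpsXnM.
by case: leqP => //= _; rewrite fps2_z2nM.
Qed.

Lemma Q_odd_coef i j :
  - qg0 (2 * i + 1)%N (2 * j + 1)%N + qgm1 (2 * i + 1)%N (2 * j + 1)%N
  = - alpha * \sum_(k < g) mu_tilde alpha_ (4 * k)
      * schur (Lambda alpha_ alpha) (i%:Z - k%:Z)
      * schur (Lambda alpha_ alpha) (j%:Z - k%:Z).
Proof.
set EE := fps_map fpsC E * fpsC E.
have EE_F : EE * (fps_map fpsC F * fpsC F) = 1.
  by rewrite mulrACA -!rmorphM exp_Lambda_mul_F_of !rmorph1 mulr1.
have Q_E : Qgm1 - Qg = - (cst2 alpha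
    * \sum_(k < g) cst2 (mu_tilde2 k.*2) * (z1 ^+ 2 * z2 ^+ 2) ^+ k * EE).
  by rewrite -[LHS]mul1r -EE_F -mulrA tensor_F_of_mul_Q -mulr_suml; ring.
have := congr1 (fun X : fps2 => X i.*2 j.*2) Q_E.
rewrite !fpsB !fpsN fps2_cstM !fps_sum !mul2n !addn1 addrC => ->.
rewrite mulNr; congr (- (_ * _)); apply: eq_bigr => k _.
rewrite -mulrA fps2_cstM fps2_z1z2_sqXnM !leq_double /EE fps2_tensor.
rewrite !schur_subn -!doubleB !fps_compX2_double (_ : (4 * k = k.*2.*2)%N); last by lia.
by case: (k <= i)%N; case: (k <= j)%N; rewrite /= ?mulr0 ?mul0r ?mulrA.
Qed.

End Proposition5.

Unset Implicit Arguments.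

Theorem proposition5 (R : realType) (g : nat)
    (alpha_ : 'I_(2 * g - 1) -> R[i]) (alpha : R[i])
    (F0 : nat -> R[i]) (qg0 qgm1 : nat -> nat -> R[i]) :
  (1 <= g)%N ->
  injective alpha_ -> (forall j, alpha_ j != alpha) ->
  is_sqrt_series F0 (F0_square alpha_) ->
  is_expansion g (F_of alpha F0) (H_g alpha_ alpha) qg0 ->
  is_expansion g.-1 F0 (H_gm1 alpha_) qgm1 ->
  forall i j : nat,
    - qg0 (2 * i + 1)%N (2 * j + 1)%N + qgm1 (2 * i + 1)%N (2 * j + 1)%N
    = - alpha * \sum_(k < g)
        mu_tilde alpha_ (4 * k) * schur (Lambda alpha_ alpha) (i%:Z - k%:Z)
                               * schur (Lambda alpha_ alpha) (j%:Z - k%:Z).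
Proof.
move=> g_gt0 _ _ F0_sqrt expansion_g expansion_gm1 i j.
exact: (Q_odd_coef (pchar_num _) g_gt0 F0_sqrt expansion_g expansion_gm1).
Qed.
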